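(* Let $n,a,b$ be positive integers and $g=a+b$. Among all double brooms $B(n,a',b')$ with $a'+b'=g$, the Wiener index is maximum when $a'=b'=g/2$ if $g$ is even, and when $a'=(g-1)/2$, $b'=(g+1)/2$ if $g$ is odd.
   Context: All graphs are finite and simple; $W(G)=\sum_{\{u,v\}\subseteq V(G)} d(u,v)$ is the Wiener index. A leaf is a vertex of degree $1$; a broom vertex is a vertex adjacent to a leaf. A double broom $B(n,a,b)$ is a tree on $n$ vertices with exactly two broom vertices $x$ and $y$ such that $\deg(x)=a+1$ and $\deg(y)=b+1$ (i.e. a path from $x$ to $y$ with $a$ pendant leaves at $x$ and $b$ pendant leaves at $y$). *)

From mathcomp Require Import all_boot.
Set Implicit Arguments. Unset Strict Implicit. Unset Printing Implicit Defensive.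

Section Graphs.
Variable T : finType.
Variable e : rel T.

Definition simple_graph : Prop := symmetric e /\ irreflexive e.

Definition connected_graph : Prop := forall u v : T, connect e u v.

(* acyclic: no cycle (a closed walk through >= 3 pairwise distinct vertices) *)
Definition acyclic : Prop := forall c : seq T, ucycle e c -> size c < 3.

Definition is_tree : Prop := simple_graph /\ connected_graph /\ acyclic.

Definition deg (x : T) : nat := #|[set y | e x y]|.

Definition leaf (x : T) : bool := deg x == 1.

Definition broom (x : T) : bool := [exists y, e x y && leaf y].

Fixpoint ball (u : T) (k : nat) : {set T} :=
  if k is k'.+1 then ball u k' :|: [set y | [exists x in ball u k', e x y]]
  else [set u].

(* graph distance: least k with v within k steps of u (for connected graphs
   this is < #|T|; the value #|T| is only returned for unreachable pairs) *)
Definition dist (u v : T) : nat := find (fun k => v \in ball u k) (iota 0 #|T|).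

(* Wiener index: sum of distances over unordered pairs of distinct vertices *)
Definition wiener : nat :=
  \sum_(p : T * T | (enum_rank p.1 < enum_rank p.2)%N) dist p.1 p.2.

Definition double_broom (n a b : nat) : Prop :=
  #|T| = n /\ is_tree /\
  exists x y : T, [/\ x != y, [set z | broom z] = [set x; y],
                      deg x = a.+1 & deg y = b.+1].
End Graphs.

(* Let D be the distance between the two broom vertices x and y.  Rooting the tree at x,
   every non-leaf vertex lies on the x-y path (the spine) and every leaf hangs at x or
   at y, so the vertices are the a leaves at x, the D + 1 spine vertices and the b
   leaves at y, and n = a + b + D + 1.  Labelling them 0, then 1, ..., D + 1 along the
   spine, then D + 2, the distance between two distinct vertices is the difference of
   their labels, except that two leaves at the same end are at distance 2.  Summing
   over pairs gives 2 W = F(a + b, D) + 2 a b D; since n and a + b determine D, the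
   Wiener index is largest when a b is, i.e. for the most balanced split. *)

From mathcomp Require Import all_boot zify.
Set Implicit Arguments. Unset Strict Implicit. Unset Printing Implicit Defensive.

Section GraphDistance.
Variables (T : finType) (e : rel T).

Lemma ballS u k v :
  (v \in ball e u k.+1) = (v \in ball e u k) || [exists w in ball e u k, e w v].
Proof. by rewrite /= in_setU inE. Qed.

Lemma ball_mono u k l v : v \in ball e u k -> k <= l -> v \in ball e u l.
Proof.
move=> Hv /subnK <-; elim: (l - k) => [//|m IH].
by rewrite addSn ballS IH.
Qed.

Lemma mem_ball u k : u \in ball e u k.
Proof. by apply: (@ball_mono _ 0); rewrite /= ?in_set1. Qed.

Lemma ball_edge u k v w : v \in ball e u k -> e v w -> w \in ball e u k.+1.
Proof. by move=> Hv Hvw; rewrite ballS; apply/orP; right; apply/existsP; exists v; apply/andP. Qed.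

Lemma mem_ball_edge u v : e u v -> v \in ball e u 1.
Proof. exact: ball_edge (mem_ball _ _). Qed.

Lemma ball_trans u v w k l :
  v \in ball e u k -> w \in ball e v l -> w \in ball e u (k + l).
Proof.
move=> Hv; elim: l w => [|l IH] w; first by rewrite /= in_set1 addn0 => /eqP ->.
rewrite ballS addnS => /orP [/IH/ball_mono|/existsP [z /andP [/IH Hz Hzw]]].
  exact.
exact: ball_edge Hz Hzw.
Qed.

Lemma path_last_ball u p : path e u p -> last u p \in ball e u (size p).
Proof.
elim: p u => [|z p IH] u /=; first by rewrite in_set1.
by case/andP=> /mem_ball_edge Huz /IH; apply: ball_trans Huz.
Qed.

Lemma dist_min u v k : v \in ball e u k -> dist e u v <= k.
Proof.
move=> Hv; rewrite /dist; case: (ltnP k #|T|) => Hk.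
  case: ltnP => // /(before_find 0).
  by rewrite nth_iota // add0n Hv.
by apply: leq_trans Hk; apply: leq_trans (find_size _ _) _; rewrite size_iota.
Qed.

Lemma dist_refl u : dist e u u = 0.
Proof. by apply/eqP; rewrite -leqn0 dist_min // mem_ball. Qed.

Lemma connect_ball_dist u v :
  connect e u v -> dist e u v < #|T| /\ v \in ball e u (dist e u v).
Proof.
case/connectP=> p Hp ->; case: (shortenP Hp) => q Hq Hu _.
have Hs : size q < #|T| by have := max_card (mem (u :: q)); rewrite (card_uniqP Hu).
have Hex : has (fun k => last u q \in ball e u k) (iota 0 #|T|).
  by apply/hasP; exists (size q); rewrite ?mem_iota ?path_last_ball.
have Hlt := Hex; rewrite has_find size_iota in Hlt.
by split; last by have := nth_find 0 Hex; rewrite nth_iota.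
Qed.

Lemma dist_eq0 u v : connect e u v -> dist e u v = 0 -> v = u.
Proof. by case/connect_ball_dist=> _ + H0; rewrite H0 /= in_set1 => /eqP. Qed.

Lemma dist_edge u s t : connect e u s -> e s t -> dist e u t <= (dist e u s).+1.
Proof. by case/connect_ball_dist=> _ Hs /(ball_edge Hs) /dist_min. Qed.

Lemma ball_lipschitz (g : T -> nat) u k v :
  (forall s t, e s t -> g t <= (g s).+1) -> v \in ball e u k -> g v <= g u + k.
Proof.
move=> Hg; elim: k v => [|k IH] v; first by rewrite /= in_set1 addn0 => /eqP ->.
rewrite ballS => /orP [/IH|/existsP [w /andP [/IH Hw /Hg]]]; lia.
Qed.

Lemma ball_sym u k v : symmetric e -> v \in ball e u k -> u \in ball e v k.
Proof.
move=> e_sym; elim: k v => [|k IH] v; first by rewrite /= !in_set1 eq_sym.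
rewrite ballS => /orP [/IH/ball_mono|/existsP [w /andP [/IH Hw Hwv]]].
  exact.
by apply: (ball_trans (mem_ball_edge _) Hw); rewrite e_sym.
Qed.

Lemma dist_sym u v : symmetric e -> connect e u v -> dist e u v = dist e v u.
Proof.
move=> e_sym Huv; have Hvu : connect e v u by rewrite (sym_connect_sym e_sym).
have [_ /(ball_sym e_sym) /dist_min Hle] := connect_ball_dist Huv.
have [_ /(ball_sym e_sym) /dist_min Hge] := connect_ball_dist Hvu.
by apply/eqP; rewrite eqn_leq Hle Hge.
Qed.

Lemma leaf_neighbour z : leaf e z -> exists w, e z w.
Proof.
case/cards1P=> w Hw; exists w.
have : w \in [set w | e z w] by rewrite Hw set11.
by rewrite inE.
Qed.

Lemma leaf_neighbour_uniq z w1 w2 : leaf e z -> e z w1 -> e z w2 -> w1 = w2.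
Proof.
case/cards1P=> w Hw H1 H2.
have : w1 \in [set w | e z w] by rewrite inE.
have : w2 \in [set w | e z w] by rewrite inE.
by rewrite Hw !in_set1 => /eqP -> /eqP ->.
Qed.

Lemma adjacent_leaves_cover u w : symmetric e -> connected_graph e ->
  leaf e u -> leaf e w -> e u w -> forall z, z = u \/ z = w.
Proof.
move=> e_sym e_conn Hu Hw Huw z.
have Hstep s t : e s t -> (s == u) || (s == w) -> (t == u) || (t == w).
  move=> Hst /orP [] /eqP Es; rewrite Es in Hst.
    by rewrite (leaf_neighbour_uniq Hu Hst Huw) eqxx orbT.
  by rewrite (leaf_neighbour_uniq Hw Hst (_ : e w u)) ?eqxx // e_sym.
have Hcl : closed e [pred t | (t == u) || (t == w)].
  by move=> s t Hst /=; apply/idP/idP; apply: Hstep; rewrite // e_sym.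
have := closed_connect Hcl (e_conn u z); rewrite !inE eqxx => /esym.
by case/orP=> /eqP ->; [left|right].
Qed.

End GraphDistance.

Section RootedTree.
Variables (T : finType) (e : rel T).
Hypotheses (e_sym : symmetric e) (e_irr : irreflexive e).
Hypotheses (e_conn : connected_graph e) (e_acyc : acyclic e).
Variable x : T.

Local Notation depth := (dist e x).

Lemma depth_root : depth x = 0.
Proof. exact: dist_refl. Qed.

Lemma depth_eq0 v : depth v = 0 -> v = x.
Proof. exact: dist_eq0. Qed.

Lemma depth_edge s t : e s t -> depth t <= (depth s).+1.
Proof. exact: dist_edge. Qed.

Lemma depth_pred v : v != x -> exists2 w, e w v & (depth w).+1 = depth v.
Proof.
move=> Hv; have [_] := connect_ball_dist (e_conn x v).
case Ev: (depth v) => [|k]; first by rewrite /= in_set1 (negbTE Hv).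
have Hk : v \notin ball e x k by apply: contraTN isT => /dist_min; lia.
rewrite ballS (negbTE Hk) => /existsP [w /andP [/dist_min Hw Hwv]].
by exists w => //; have := depth_edge Hwv; lia.
Qed.

Definition avoid (v : T) := [rel s t | e s t && (s != v) && (t != v)].

Lemma avoid_path_notin v s p : path (avoid v) s p -> v \notin p.
Proof.
elim: p s => [//|z p IH] s /= /andP [/andP [_ Hz] /IH Hp].
by rewrite inE negb_or eq_sym Hz.
Qed.

(* Two neighbours of v joined outside v would close a cycle through v. *)
Lemma avoid_neighbours v w1 w2 :
  e v w1 -> e v w2 -> w1 != w2 -> ~ connect (avoid v) w1 w2.
Proof.
move=> H1 H2 Hne /connectP [p Hp Hl]; case: (shortenP Hp) Hl => {Hp}p Hp Hu _ Hl.
have Hv : v \notin w1 :: p.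
  rewrite inE negb_or (avoid_path_notin Hp) andbT.
  by apply: contraTneq H1 => ->; rewrite e_irr.
have Hp1 : path e w1 p by apply: sub_path Hp => s t /andP [/andP [->]].
have Hcyc : ucycle e [:: v, w1 & p].
  by rewrite /ucycle /= rcons_path -Hl Hp1 H1 e_sym H2 Hv.
have := e_acyc Hcyc; case: p {Hp Hu Hv Hp1 Hcyc} Hl => //= Hl.
by rewrite Hl eqxx in Hne.
Qed.

Lemma connect_avoid_root v w : depth w <= depth v -> w != v -> connect (avoid v) w x.
Proof.
move Ek: (depth w) => k; elim: k w Ek => [|k IH] w Ew Hwv Hneq.
  by rewrite (depth_eq0 Ew) connect0.
have Hwx : w != x by apply: contraTneq isT => Ex; rewrite Ex depth_root in Ew.
have [w' Hw'w Ew'] := depth_pred Hwx.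
have Hw'v : w' != v by apply: contraTneq isT => Ev; rewrite -Ev in Hwv; lia.
apply: (@connect_trans _ _ w'); last by apply: IH => //; lia.
by apply: connect1; rewrite /= e_sym Hw'w Hneq.
Qed.

Lemma lower_neighbour_uniq v w1 w2 :
  e w1 v -> e w2 v -> depth w1 <= depth v -> depth w2 <= depth v -> w1 = w2.
Proof.
move=> H1 H2 Hd1 Hd2; apply/eqP/negP => /negP Hne.
have Hv1 : w1 != v by apply: contraTneq H1 => ->; rewrite e_irr.
have Hv2 : w2 != v by apply: contraTneq H2 => ->; rewrite e_irr.
apply: (@avoid_neighbours v w1 w2); rewrite 1?e_sym //.
apply: (connect_trans (connect_avoid_root Hd1 Hv1)).
rewrite (@sym_connect_sym _ (avoid v)) ?connect_avoid_root // => s t /=.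
by rewrite e_sym andbAC.
Qed.

Definition parent v := odflt v [pick w | e w v && (depth w < depth v)].

Lemma parent_spec v : v != x -> e (parent v) v /\ (depth (parent v)).+1 = depth v.
Proof.
move=> Hv; have [w Hw Ew] := depth_pred Hv; rewrite /parent.
case: pickP => [w' /andP [Hw' Hlt]|/(_ w)] /=; last by rewrite Hw -Ew leqnn.
by split=> //; have := depth_edge Hw'; lia.
Qed.

Lemma parent_edge s t : e s t -> depth s < depth t ->
  s = parent t /\ (depth s).+1 = depth t.
Proof.
move=> Hst Hlt; have Htx : t != x by apply: contraTneq Hlt => ->; rewrite depth_root.
have [Hpt Ept] := parent_spec Htx.
have Es : s = parent t by apply: lower_neighbour_uniq Hst Hpt _ _; lia.
by rewrite -Es in Ept.
Qed.

Lemma edge_depth_neq s t : e s t -> depth s != depth t.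
Proof.
move=> Hst; apply/eqP => Est.
have [Etx|Htx] := eqVneq t x.
  by move: Est Hst; rewrite Etx depth_root => /depth_eq0 ->; rewrite e_irr.
have [Hpt Ept] := parent_spec Htx.
have Es : s = parent t by apply: lower_neighbour_uniq Hst Hpt _ _; lia.
by move: Ept; rewrite -Es Est; lia.
Qed.

Lemma edge_parent s t : e s t ->
  (s = parent t /\ (depth s).+1 = depth t) \/ (t = parent s /\ (depth t).+1 = depth s).
Proof.
move=> Hst; have := edge_depth_neq Hst; rewrite neq_ltn => /orP [Hlt|Hlt].
  by left; apply: parent_edge.
by right; apply: parent_edge; rewrite // e_sym.
Qed.

End RootedTree.

Definition label_count a b D k := if k == 0 then a else if k == D.+2 then b else 1.

(* On the diagonal, a spine label gives the distance 0 from a vertex to itself, an end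
   label the distance 2 between two distinct leaves at that end. *)
Definition label_dist D k j :=
  if k == j then (if (k == 0) || (k == D.+2) then 2 else 0) else (k - j) + (j - k).

Lemma label_distC D k j : label_dist D k j = label_dist D j k.
Proof. by rewrite /label_dist eq_sym; case: eqP => [->|_] //; lia. Qed.

Lemma label_dist_neq D k j : k != j -> label_dist D k j = (k - j) + (j - k).
Proof. by rewrite /label_dist => /negbTE ->. Qed.

Definition label_sum a b D :=
  \sum_(k < D.+3) \sum_(j < D.+3) label_count a b D k * label_count a b D j * label_dist D k j.

Lemma sum_fibres (T : finType) (g : T -> nat) M (F : nat -> nat) :
  (forall v, g v < M) -> \sum_v F (g v) = \sum_(k < M) #|[set v | g v == k]| * F k.
Proof.
move=> Hg; rewrite (partition_big (fun v => Ordinal (Hg v)) predT) //=.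
apply: eq_bigr => k _; rewrite -sum_nat_const.
by apply: eq_big => [v|v /eqP <-] //; rewrite inE -val_eqE.
Qed.

Lemma sum_sym_pairs (T : finType) (F : T -> T -> nat) :
  (forall u v, F u v = F v u) -> (forall u, F u u = 0) ->
  \sum_u \sum_v F u v = (\sum_(p : T * T | enum_rank p.1 < enum_rank p.2) F p.1 p.2).*2.
Proof.
move=> F_sym F_diag; rewrite pair_big /=.
rewrite (bigID (fun p : T * T => enum_rank p.1 < enum_rank p.2)) /=.
rewrite -addnn; congr (_ + _).
rewrite (reindex_inj (h := fun p : T * T => (p.2, p.1))) /=; last first.
  by move=> [? ?] [? ?] [-> ->].
rewrite big_mkcond [RHS]big_mkcond; apply: eq_bigr => [[u v]] _ /=; rewrite F_sym.
case: (ltngtP (enum_rank v) (enum_rank u)) => // /val_inj/enum_rank_inj ->.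
by rewrite F_diag.
Qed.

Lemma sum_ends_spine D (F : nat -> nat) :
  \sum_(k < D.+3) F k = F 0 + \sum_(i < D.+1) F i.+1 + F D.+2.
Proof. by rewrite big_ord_recl big_ord_recr /= addnA. Qed.

Lemma label_count_spine a b D (i : 'I_D.+1) : label_count a b D i.+1 = 1.
Proof. by rewrite /label_count /= eqSS ltn_eqF. Qed.

Lemma sum_label_count a b D : \sum_(k < D.+3) label_count a b D k = a + b + D.+1.
Proof.
rewrite sum_ends_spine /label_count /= eqxx (eq_bigr (fun _ => 1)) ?sum1_card ?card_ord.
  lia.
by move=> i _; rewrite ifN_eq // eqSS ltn_eqF.
Qed.

Lemma sum_rev_succ D : \sum_(i < D.+1) (D.+1 - i) = \sum_(i < D.+1) i.+1.
Proof.
rewrite (reindex_inj rev_ord_inj) /=; apply: eq_bigr => i _.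
by have := ltn_ord i; lia.
Qed.

Lemma label_row_first a b D :
  \sum_(j < D.+3) label_count a b D j * label_dist D 0 j
  = 2 * a + \sum_(i < D.+1) i.+1 + b * D.+2.
Proof.
rewrite (sum_ends_spine D (fun j => label_count a b D j * label_dist D 0 j)).
rewrite /label_count /label_dist eqxx /=; congr (_ + _ + _).
- by rewrite mulnC.
- by apply: eq_bigr => i _; rewrite ifN_eq ?eqSS ?ltn_eqF // mul1n subn0.
- by rewrite eqxx subn0.
Qed.

Lemma label_row_last a b D :
  \sum_(j < D.+3) label_count a b D j * label_dist D D.+2 j
  = a * D.+2 + \sum_(i < D.+1) i.+1 + 2 * b.
Proof.
rewrite (sum_ends_spine D (fun j => label_count a b D j * label_dist D D.+2 j)) -sum_rev_succ.
rewrite /label_count /label_dist eqxx /=; congr (_ + _ + _).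
- by rewrite subn0 sub0n addn0.
- apply: eq_bigr => i _; have Hi := ltn_ord i.
  have Hne : (i.+1 == D.+2) = false by rewrite eqSS ltn_eqF.
  by rewrite Hne eq_sym Hne mul1n; lia.
- by rewrite eqxx mulnC.
Qed.

Lemma label_rows_spine a b D :
  \sum_(i < D.+1) \sum_(j < D.+3) label_count a b D j * label_dist D i.+1 j
  = a * \sum_(i < D.+1) i.+1 + \sum_(i < D.+1) \sum_(j < D.+1) ((i - j) + (j - i))
    + b * \sum_(i < D.+1) i.+1.
Proof.
rewrite -[in b * _]sum_rev_succ !big_distrr -!big_split /=; apply: eq_bigr => i _.
rewrite (sum_ends_spine D (fun j => label_count a b D j * label_dist D i.+1 j)).
have Hi := ltn_ord i; congr (_ + _ + _).
- by rewrite /label_dist /= subn0 sub0n addn0.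
- apply: eq_bigr => j _; rewrite label_count_spine mul1n /label_dist eqSS.
  by case: eqP => [->|]; rewrite ?subnn //= eqSS ltn_eqF.
- by rewrite /label_count eqxx /label_dist eqSS (ltn_eqF Hi); congr (_ * _); lia.
Qed.

Lemma label_sumE a b D : label_sum a b D =
  2 * a * a + 2 * b * b + 2 * a * b * D.+2 + 2 * (a + b) * \sum_(i < D.+1) i.+1
  + \sum_(i < D.+1) \sum_(j < D.+1) ((i - j) + (j - i)).
Proof.
rewrite /label_sum (eq_bigr (fun k : 'I_D.+3 => label_count a b D k *
  \sum_(j < D.+3) label_count a b D j * label_dist D k j)) => [|k _]; last first.
  by rewrite big_distrr /=; apply: eq_bigr => j _; rewrite mulnA.
rewrite (sum_ends_spine D (fun k => label_count a b D k *
  \sum_(j < D.+3) label_count a b D j * label_dist D k j)).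
rewrite (eq_bigr (fun i : 'I_D.+1 =>
  \sum_(j < D.+3) label_count a b D j * label_dist D i.+1 j)) => [|i _]; last first.
  by rewrite label_count_spine mul1n.
rewrite label_row_first label_row_last label_rows_spine /label_count !eqxx /=; nia.
Qed.

Lemma label_sum_split a b D : label_sum a b D = label_sum (a + b) 0 D + (a * b * D).*2.
Proof. rewrite !label_sumE; nia. Qed.

Lemma mul_le_half_uphalf a b : a * b <= (a + b)./2 * uphalf (a + b).
Proof.
wlog Hab : a b / a <= b => [Hwlog|].
  by case: (leqP a b) => [|/ltnW] /Hwlog //; rewrite addnC mulnC.
have := odd_double_half (a + b); rewrite uphalf_half; move: (a + b)./2 => q Eq.
have [r Eqr] : exists r, q = a + r by exists (q - a); lia.
have Eb : b = a + r.*2 + odd (a + b) by lia.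
by rewrite Eqr Eb; case: odd; nia.
Qed.

Section DoubleBroom.
Variables (T : finType) (e : rel T).
Hypotheses (e_sym : symmetric e) (e_irr : irreflexive e).
Hypotheses (e_conn : connected_graph e) (e_acyc : acyclic e).
Variables (x y : T) (a b : nat).
Hypotheses (xy_neq : x != y) (brooms_xy : [set z | broom e z] = [set x; y]).
Hypotheses (deg_x : deg e x = a.+1) (deg_y : deg e y = b.+1) (ab_gt0 : 0 < a + b).

Local Notation depth := (dist e x).
Local Notation parent := (parent e x).
Local Notation D := (dist e x y).

Lemma broom_xy z : broom e z -> (z == x) || (z == y).
Proof. by rewrite -!in_set1 -in_setU -brooms_xy inE. Qed.

Lemma leaf_neighbour_xy l z : leaf e l -> e l z -> (z == x) || (z == y).
Proof. by move=> Hl Hlz; apply: broom_xy; apply/existsP; exists l; rewrite e_sym Hlz. Qed.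

(* If a broom end were a leaf, it and its leaf neighbour would be the whole tree. *)
Lemma broom_end_not_leaf z : (z == x) || (z == y) -> ~~ leaf e z.
Proof.
rewrite -!in_set1 -in_setU -brooms_xy inE => /existsP [l /andP [Hzl Hl]].
apply/negP => Hz; have all_leaves w : leaf e w.
  by case: (adjacent_leaves_cover e_sym e_conn Hz Hl Hzl w) => ->.
by move: (all_leaves x) (all_leaves y); rewrite /leaf deg_x deg_y; lia.
Qed.

Definition spine k := iter (D - k) parent y.

Lemma depth_iter_parent m : m <= D -> depth (iter m parent y) = D - m.
Proof.
elim: m => [|m IH] Hm; first by rewrite subn0.
have Hne : iter m parent y != x.
  by apply/eqP => Ex; move: (IH (ltnW Hm)); rewrite Ex depth_root; lia.
have [_] := parent_spec e_conn Hne; rewrite iterS IH ?(ltnW Hm); lia.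
Qed.

Lemma depth_spine k : k <= D -> depth (spine k) = k.
Proof. by move=> Hk; rewrite /spine depth_iter_parent ?subKn ?leq_subr. Qed.

Lemma spine_last : spine D = y.
Proof. by rewrite /spine subnn. Qed.

Lemma spine0 : spine 0 = x.
Proof. by apply: (depth_eq0 e_conn); rewrite depth_spine. Qed.

Lemma spine_gt0 : 0 < D.
Proof. by rewrite lt0n; apply: contra xy_neq => /eqP /(depth_eq0 e_conn) ->. Qed.

Lemma spine_edge k : k < D -> spine k = parent (spine k.+1) /\ e (spine k) (spine k.+1).
Proof.
move=> Hk; have Ek : spine k = parent (spine k.+1).
  by rewrite /spine -iterS subnSK.
split=> //; rewrite Ek; apply: (proj1 (parent_spec e_conn _)).
by apply/eqP => Ex; move: (depth_spine Hk); rewrite Ex depth_root.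
Qed.

Lemma spine_not_leaf k : k <= D -> ~~ leaf e (spine k).
Proof.
move=> HkD; case: (posnP k) => [->|Hk0]; first by rewrite spine0 broom_end_not_leaf ?eqxx.
case: (ltngtP k D) HkD => // [HkD _|-> _]; last first.
  by rewrite spine_last broom_end_not_leaf ?eqxx ?orbT.
have [_ Hnext] := spine_edge HkD.
have [_ Hprev] : spine k.-1 = parent (spine k.-1.+1) /\ e (spine k.-1) (spine k.-1.+1).
  by apply: spine_edge; lia.
rewrite prednK // e_sym in Hprev.
apply/negP => /leaf_neighbour_uniq /(_ Hnext Hprev) /(congr1 depth).
by rewrite !depth_spine; lia.
Qed.

Lemma nonleaf_child z : ~~ leaf e z -> z != x -> exists2 c, e z c & c != parent z.
Proof.
move=> Hz Hzx; have [Hpz _] := parent_spec e_conn Hzx.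
case: (pickP [pred c | e z c && (c != parent z)]) => [c /andP [] | Hnone]; first by exists c.
case/negP: Hz; apply/eqP/(@eq_card1 _ (parent z)) => w; rewrite !inE.
apply/idP/eqP => [Hw|->]; last by rewrite e_sym.
by apply/eqP; move: (Hnone w); rewrite /= Hw => /negbFE.
Qed.

(* Downward induction on the depth: a non-leaf z other than x, y has a child, which
   is not a leaf (else z would be a broom vertex), so lies on the spine, with parent z. *)
Lemma nonleaf_spine z : ~~ leaf e z -> depth z <= D /\ spine (depth z) = z.
Proof.
move Em: (#|T| - depth z) => m; elim: m z Em => [|m IH] z Em Hz.
  by have [+ _] := connect_ball_dist (e_conn x z); lia.
have [->|Hzy] := eqVneq z y; first by rewrite spine_last.
have [->|Hzx] := eqVneq z x; first by rewrite depth_root spine0.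
have [c Hzc Hcp] := nonleaf_child Hz Hzx.
have [[Ez Hzc_depth]|[Ecz _]] := edge_parent e_sym e_irr e_conn e_acyc x Hzc; last first.
  by rewrite Ecz eqxx in Hcp.
have Hc : ~~ leaf e c.
  apply/negP => Hc; have /broom_xy : broom e z by apply/existsP; exists c; rewrite Hzc.
  by rewrite (negbTE Hzx) (negbTE Hzy).
have [Hc_lt _] := connect_ball_dist (e_conn x c).
have [HcD Hsc] : depth c <= D /\ spine (depth c) = c by apply: IH Hc; lia.
have HzD : depth z < D by lia.
split; first exact: ltnW.
by have [-> _] := spine_edge HzD; rewrite Hzc_depth Hsc.
Qed.

Definition label v := if leaf e v then (if e v x then 0 else D.+2) else (depth v).+1.

Variant label_spec v : nat -> Prop :=
  | LabelX of leaf e v & e v x : label_spec v 0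
  | LabelY of leaf e v & e v y & ~~ e v x : label_spec v D.+2
  | LabelSpine k of k <= D & spine k = v : label_spec v k.+1.

Lemma labelP v : label_spec v (label v).
Proof.
rewrite /label; case: ifPn => Hv; last first.
  by have [HD <-] := nonleaf_spine Hv; rewrite depth_spine //; constructor.
case: ifPn => Hxv; first exact: LabelX.
have [w Hvw] := leaf_neighbour Hv.
have /orP [/eqP Ew|/eqP Ew] := leaf_neighbour_xy Hv Hvw; rewrite Ew in Hvw.
  by rewrite Hvw in Hxv.
exact: LabelY.
Qed.

Lemma label_spine k : k <= D -> label (spine k) = k.+1.
Proof. by move=> Hk; rewrite /label (negbTE (spine_not_leaf Hk)) depth_spine. Qed.

Lemma label_lipschitz s t : e s t -> label t <= (label s).+1.
Proof.
move=> Hst; have Hts : e t s by rewrite e_sym.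
case: (labelP t) => [//|Ht Hty _|k HkD Ekt].
  by have := label_spine (leqnn D); rewrite spine_last (leaf_neighbour_uniq Ht Hts Hty) => ->.
case: (labelP s) => [Hs Hsx|_ _ _|i HiD Eis].
- by have := depth_spine HkD; rewrite Ekt (leaf_neighbour_uniq Hs Hst Hsx) depth_root => <-.
- lia.
- by have := depth_edge e_conn x Hst; rewrite -Ekt -Eis !depth_spine.
Qed.

Lemma spine_ball i j : i <= j <= D -> spine j \in ball e (spine i) (j - i).
Proof.
case/andP=> + HjD; elim: j HjD => [|j IH] HjD Hij.
  by rewrite leqn0 in Hij; rewrite (eqP Hij) mem_ball.
case: (eqVneq i j.+1) => [->|Hne]; first by rewrite subnn mem_ball.
rewrite subSn; last by lia.
by apply: ball_edge (IH _ _) (proj2 (spine_edge _)); lia.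
Qed.

Lemma dist_le_label u v : u != v -> dist e u v <= label_dist D (label u) (label v).
Proof.
wlog Hle : u v / label u <= label v => [Hwlog Huv|Huv].
  case: (leqP (label u) (label v)) => [|/ltnW] Hle; first exact: Hwlog.
  by rewrite dist_sym // label_distC Hwlog // eq_sym.
have x_ball w k : e w x -> k <= D -> spine k \in ball e w k.+1.
  move=> Hwx HkD; apply: (ball_trans (mem_ball_edge Hwx)).
  by have := @spine_ball 0 k; rewrite spine0 subn0 HkD; apply.
apply: dist_min; move: Hle Huv.
case: (labelP u) => [Hu Hux|Hu Huy Hux|i HiD <-];
case: (labelP v) => [Hv Hvx|Hv Hvy Hvx|j HjD <-] Hle Huv //.
- by rewrite /label_dist eqxx; apply: ball_edge (mem_ball_edge Hux) _; rewrite e_sym.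
- rewrite label_dist_neq //; apply: ball_mono (ball_edge (x_ball _ _ Hux (leqnn D)) _) _.
    by rewrite spine_last e_sym.
  lia.
- by rewrite label_dist_neq //; apply: ball_mono (x_ball _ _ Hux HjD) _; lia.
- by rewrite /label_dist eqxx orbT; apply: ball_edge (mem_ball_edge Huy) _; rewrite e_sym.
- lia.
- rewrite label_dist_neq; last by lia.
  have Hy : y \in ball e (spine i) (D - i).
    by have := @spine_ball i D; rewrite spine_last HiD leqnn; apply.
  by apply: ball_mono (ball_edge Hy _) _; rewrite 1?e_sym //; lia.
- have Hij : i != j by apply: contraNneq Huv => ->.
  rewrite label_dist_neq ?eqSS //; apply: ball_mono (spine_ball (i := i) (j := j) _) _; lia.
Qed.

Lemma label_end_leaf v : (label v == 0) || (label v == D.+2) -> leaf e v.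
Proof. by case: (labelP v) => // k HkD _; rewrite eqSS; case: eqP => //; lia. Qed.

Lemma leaves_dist u v : leaf e u -> leaf e v -> u != v -> 1 < dist e u v.
Proof.
move=> Hu Hv Huv; have [_] := connect_ball_dist (e_conn u v).
case: (dist e u v) => [|[|//]] /=; first by rewrite in_set1 eq_sym (negbTE Huv).
rewrite in_setU in_set1 eq_sym (negbTE Huv) inE => /existsP [w /andP []].
rewrite in_set1 => /eqP -> Huv_edge.
have /negP[] : ~~ leaf e x by rewrite broom_end_not_leaf ?eqxx.
by case: (adjacent_leaves_cover e_sym e_conn Hu Hv Huv_edge x) => ->.
Qed.

Lemma label_le_dist u v : u != v -> label_dist D (label u) (label v) <= dist e u v.
Proof.
move=> Huv; have [_ Hball] := connect_ball_dist (e_conn u v).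
have Hvu := ball_lipschitz label_lipschitz Hball.
have Huv' := ball_lipschitz label_lipschitz (ball_sym e_sym Hball).
rewrite /label_dist; case: eqP => [Elab|_]; last lia.
case: ifPn => // Hend; apply: leaves_dist => //; apply: label_end_leaf => //.
by rewrite -Elab.
Qed.

Lemma dist_label u v : u != v -> dist e u v = label_dist D (label u) (label v).
Proof. by move=> Huv; apply/eqP; rewrite eqn_leq dist_le_label ?label_le_dist. Qed.

Lemma neighbours_x : [set w | e x w] = spine 1 |: [set v | label v == 0].
Proof.
apply/setP => w; rewrite !inE; apply/idP/orP => [Hxw|[/eqP ->|]].
- case: (labelP w) => [_ _|_ _|k HkD Ekw]; [by right|by rewrite e_sym Hxw|left].
  have Hk1 : k <= 1 by have := depth_edge e_conn x Hxw; rewrite -Ekw depth_root depth_spine.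
  have Hk0 : k != 0 by apply: contraTneq Hxw => Ek; rewrite -Ekw Ek spine0 e_irr.
  by rewrite -Ekw (_ : k = 1) //; lia.
- by have [_] := spine_edge spine_gt0; rewrite spine0.
- by case: (labelP w) => // _ Hwx _; rewrite e_sym.
Qed.

Lemma neighbours_y : [set w | e y w] = spine D.-1 |: [set v | label v == D.+2].
Proof.
have HD1 : D.-1 < D by rewrite prednK ?spine_gt0.
apply/setP => w; rewrite !inE; apply/idP/orP => [Hyw|[/eqP ->|]].
- case: (labelP w) => [Hw Hwx|_ _|k HkD Ekw]; [|by right|left].
    by move: xy_neq; rewrite e_sym in Hyw; rewrite (leaf_neighbour_uniq Hw Hwx Hyw) eqxx.
  have [[_ Hdepth]|[_ Hdepth]] := edge_parent e_sym e_irr e_conn e_acyc x Hyw.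
    by exfalso; move: Hdepth; rewrite -Ekw depth_spine //; lia.
  by move: Hdepth; rewrite -Ekw depth_spine // => <-.
- by have [_] := spine_edge HD1; rewrite prednK ?spine_gt0 // spine_last e_sym.
- case: (labelP w) => [//|_ Hwy _ _|k HkD _]; first by rewrite e_sym.
  by rewrite eqSS ltn_eqF.
Qed.

Lemma label_preim_spine k : 0 < k < D.+2 -> [set v | label v == k] = [set spine k.-1].
Proof.
move=> Hk; apply/setP => w; rewrite !inE; apply/eqP/eqP => [|->]; last first.
  by rewrite label_spine; lia.
by case: (labelP w) => [||j _ <- <-] //; lia.
Qed.

Lemma card_label k : k < D.+3 -> #|[set v | label v == k]| = label_count a b D k.
Proof.
move=> Hk; rewrite /label_count; case: eqP => [->|Hk0].
  have Hn : spine 1 \notin [set v | label v == 0] by rewrite inE label_spine ?spine_gt0.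
  by move: deg_x; rewrite /deg neighbours_x cardsU1 Hn => [[]].
case: eqP => [->|HkD]; last by rewrite label_preim_spine ?cards1 //; lia.
have Hn : spine D.-1 \notin [set v | label v == D.+2].
  by rewrite inE label_spine ?leq_pred // prednK ?spine_gt0 //; lia.
by move: deg_y; rewrite /deg neighbours_y cardsU1 Hn => [[]].
Qed.

Lemma label_lt v : label v < D.+3.
Proof. by case: (labelP v) => // k HkD _; rewrite !ltnS ltnW. Qed.

Lemma card_double_broom : #|T| = a + b + D.+1.
Proof.
rewrite -sum1_card (sum_fibres (fun=> 1) label_lt) -sum_label_count.
by apply: eq_bigr => k _; rewrite card_label ?muln1.
Qed.

Lemma sum_label_dist : \sum_u \sum_v label_dist D (label u) (label v) = label_sum a b D.
Proof.
rewrite (eq_bigr (fun u => \sum_(j < D.+3) label_count a b D j * label_dist D (label u) j)).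
  rewrite (sum_fibres (fun k => \sum_(j < D.+3) label_count a b D j * label_dist D k j)
    label_lt).
  apply: eq_bigr => k _; rewrite card_label // big_distrr /=.
  by apply: eq_bigr => j _; rewrite mulnA.
move=> u _; rewrite (sum_fibres (label_dist D (label u)) label_lt).
by apply: eq_bigr => j _; rewrite card_label.
Qed.

Lemma sum_label_dist_diag : \sum_u label_dist D (label u) (label u) = (a + b).*2.
Proof.
rewrite (sum_fibres (fun k => label_dist D k k) label_lt).
rewrite (eq_bigr (fun k : 'I_D.+3 => label_count a b D k * label_dist D k k)); last first.
  by move=> k _; rewrite card_label.
rewrite (sum_ends_spine D (fun k => label_count a b D k * label_dist D k k)) big1 => [|i _].
  by rewrite /label_dist /label_count !eqxx /=; lia.
by rewrite /label_dist eqxx /= eqSS ltn_eqF ?muln0.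
Qed.

Lemma wiener_double_broom : (wiener e).*2 + (a + b).*2 = label_sum a b D.
Proof.
have dist_symm u v : dist e u v = dist e v u by apply: dist_sym.
rewrite /wiener -sum_sym_pairs //; last exact: dist_refl.
rewrite -sum_label_dist -sum_label_dist_diag -big_split.
apply: eq_bigr => u _ /=; rewrite (bigD1 u) // [in RHS](bigD1 u) //= dist_refl addnC.
by congr (_ + _); apply: eq_bigr => v Hvu; rewrite dist_label // eq_sym.
Qed.

End DoubleBroom.

Lemma double_broom_wiener (T : finType) (e : rel T) n a b : 0 < a + b ->
  double_broom e n a b ->
  exists D, n = a + b + D.+1 /\ (wiener e).*2 + (a + b).*2 = label_sum a b D.
Proof.
move=> Hab [<- [[[e_sym e_irr] [e_conn e_acyc]] [x [y [Hxy Hbr Hdx Hdy]]]]].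
exists (dist e x y); split; first exact: card_double_broom.
exact: wiener_double_broom.
Qed.

Theorem mainTheorem13 (n a b : nat) : 0 < n -> 0 < a -> 0 < b ->
  forall (T1 : finType) (e1 : rel T1) (a' b' : nat),
    a' + b' = a + b -> double_broom e1 n a' b' ->
  forall (T2 : finType) (e2 : rel T2),
    double_broom e2 n (a + b)./2 (uphalf (a + b)) ->
    wiener e1 <= wiener e2.
Proof.
move=> _ a_gt0 _ T1 e1 a' b' Hsum H1 T2 e2 H2.
have Hhalves : (a + b)./2 + uphalf (a + b) = a + b.
  by rewrite uphalf_half addnCA addnn odd_double_half.
have pos1 : 0 < a' + b' by rewrite Hsum addn_gt0 a_gt0.
have pos2 : 0 < (a + b)./2 + uphalf (a + b) by rewrite Hhalves addn_gt0 a_gt0.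
have [D1 [Hn1 HW1]] := double_broom_wiener pos1 H1.
have [D2 [Hn2 HW2]] := double_broom_wiener pos2 H2.
have ED : D1 = D2 by lia.
rewrite label_sum_split Hsum in HW1; rewrite label_sum_split Hhalves -ED in HW2.
have := leq_mul (mul_le_half_uphalf a' b') (leqnn D1); rewrite Hsum.
lia.
Qed.
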